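(* Assume the standing hypotheses and let $\sigma\in(0,1)$. For $(x,\lambda)\in\mathcal B((x^*,\lambda^* ),\delta)$ with $x>0,\lambda>0$, let $(\Delta x^N,\Delta\lambda^N)$ be the Newton direction for $\mu^+=\sigma\mu$, and define for $i=1,\dots,n$ $$\Delta x_i^C=-x_i+\frac{\mu^+}{\lambda_i},\qquad \Delta\lambda_i^C=-\lambda_i+\frac{\mu^+}{x_i}.$$ Then for all $i$, $\Delta x_i^C-\Delta x_i^N=\frac{x_i}{\lambda_i}\Delta\lambda_i^N$ and $\Delta\lambda_i^C-\Delta\lambda_i^N=\frac{\lambda_i}{x_i}\Delta x_i^N$. Moreover, for every $C_1>0$ there exist $\rho>0$, $\bar\mu\in(0,\hat\mu]$ and $C>0$ such that for all $\mu\in(0,\bar\mu]$ and all $(x,\lambda)\in\mathcal B((x^*,\lambda^* ),\delta)$ with $x>0,\lambda>0$, $\|(x,\lambda)-(x^\mu,\lambda^\mu)\|<\rho$, $\|F_\mu(x,\lambda)\|\le C_1\mu$: $$|\Delta x_i^C-\Delta x_i^N|\le C\mu^2\ (i\in\mathcal A),\qquad |\Delta\lambda_i^C-\Delta\lambda_i^N|\le C\mu^2\ (i\in\mathcal I).$$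
   Context: Problem: minimize $f(x)$ subject to $x\ge0$, $f:\mathbb R^n\to\mathbb R$ twice continuously differentiable with locally Lipschitz Hessian. Norms Euclidean; $e$ all-ones; $X=\mathrm{diag}(x)$, $\Lambda=\mathrm{diag}(\lambda)$; $F_\mu(x,\lambda)=\begin{bmatrix}\nabla f(x)-\lambda\\ \Lambda Xe-\mu e\end{bmatrix}$, $F'(x,\lambda)=\begin{bmatrix}\nabla^2f(x)&-I\\ \Lambda&X\end{bmatrix}$. The Newton direction for $\mu^+=\sigma\mu$ solves $F'(x,\lambda)(\Delta x^N,\Delta\lambda^N)=-F_{\mu^+}(x,\lambda)$. Standing hypotheses: $(x^*,\lambda^* )$ satisfies $\nabla f(x^* )=\lambda^*$, $x^*\ge0$, $\lambda^*\ge0$, $x_i^*\lambda_i^*=0$, $x^*+\lambda^*>0$, $[\nabla^2f(x^* )]_{\mathcal I\mathcal I}\succ0$, where $\mathcal A=\{i:x^*_i=0\}$, $\mathcal I=\{i:x_i^*>0\}$. $\delta>0$: $F'$ nonsingular on $\mathcal B((x^*,\lambda^* ),\delta)$ with $\|F'^{-1}\|\le M$; $\hat\mu>0$: for $\mu\in(0,\hat\mu]$ a Lipschitz barrier trajectory $(x^\mu,\lambda^\mu)\in\mathcal B((x^*,\lambda^* ),\delta)$ with $F_\mu(x^\mu,\lambda^\mu)=0$, $\|(x^\mu,\lambda^\mu)-(x^*,\lambda^* )\|\le C_4\mu$ exists. *)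

From HB Require Import structures.
From mathcomp Require Import all_boot all_order all_algebra.
From mathcomp Require Import all_classical all_reals all_analysis.
Set Implicit Arguments. Unset Strict Implicit. Unset Printing Implicit Defensive.
Import Order.TTheory GRing.Theory Num.Theory.
Import numFieldNormedType.Exports.
Local Open Scope ring_scope.

Section Defs.
Variable R : realType.
Variable n : nat.
Local Notation vec := 'cV[R]_n.

Definition enorm m (v : 'cV[R]_m) : R := Num.sqrt (\sum_(i < m) (v i 0) ^+ 2).

Definition pdist (x l y k : vec) : R := enorm (col_mx x l - col_mx y k).

Definition ebasis (i : 'I_n) : vec := delta_mx i 0.

Definition grad (f : vec -> R) (x : vec) : vec :=
  \col_i derive f x (ebasis i).
Definition hess (f : vec -> R) (x : vec) : 'M[R]_n :=
  \matrix_(i, j) derive (fun y => grad f y i 0) x (ebasis j).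

Definition C2_locLipHess (f : vec -> R) : Prop :=
  (forall x, differentiable f x) /\
  (forall x, differentiable (grad f) x) /\
  continuous (hess f) /\
  (forall x, exists r : R, exists L : R, 0 < r /\
     forall y z, `|y - x| < r -> `|z - x| < r ->
        `|hess f y - hess f z| <= L * `|y - z|).

Definition Fmu (f : vec -> R) (mu : R) (x l : vec) : 'cV[R]_(n + n) :=
  col_mx (grad f x - l) (\col_i (l i 0 * x i 0 - mu)).

Definition Fprime (f : vec -> R) (x l : vec) : 'M[R]_(n + n) :=
  block_mx (hess f x) (- 1%:M) (diag_mx l^T) (diag_mx x^T).

Definition vpos (v : vec) : Prop := forall i, 0 < v i 0.

Definition standing_hyps (f : vec -> R) (xs ls : vec) (delta M muhat C4 : R)
  (xmu lmu : R -> vec) : Prop :=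
  C2_locLipHess f /\
  grad f xs = ls /\
  (forall i, 0 <= xs i 0) /\ (forall i, 0 <= ls i 0) /\
  (forall i, xs i 0 * ls i 0 = 0) /\
  (forall i, 0 < xs i 0 + ls i 0) /\
  (* [hess f(xs)]_{II} positive definite, I = {i : x*_i > 0} *)
  (forall v : vec, v != 0 -> (forall i, xs i 0 = 0 -> v i 0 = 0) ->
      0 < (v^T *m hess f xs *m v) 0 0) /\
  0 < delta /\
  (forall x l, pdist x l xs ls < delta ->
     Fprime f x l \in unitmx /\
     forall w : 'cV[R]_(n + n), enorm (invmx (Fprime f x l) *m w) <= M * enorm w) /\
  0 < muhat /\
  (forall mu, 0 < mu <= muhat ->
     vpos (xmu mu) /\ vpos (lmu mu) /\
     pdist (xmu mu) (lmu mu) xs ls < delta /\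
     Fmu f mu (xmu mu) (lmu mu) = 0 /\
     pdist (xmu mu) (lmu mu) xs ls <= C4 * mu) /\
  (exists L : R, forall mu1 mu2, 0 < mu1 <= muhat -> 0 < mu2 <= muhat ->
     pdist (xmu mu1) (lmu mu1) (xmu mu2) (lmu mu2) <= L * `|mu1 - mu2|).

End Defs.

From HB Require Import structures.
From mathcomp Require Import all_boot all_order all_algebra.
From mathcomp Require Import all_classical all_reals all_analysis.
From mathcomp Require Import ring lra.
Import Order.TTheory GRing.Theory Num.Theory.
Import numFieldNormedType.Exports.
Set Implicit Arguments. Unset Strict Implicit.
Local Open Scope ring_scope.

(* The last n rows of the Newton system F'(x,l) d = -F_{sigma mu}(x,l) read,
   componentwise, l_i dx_i + x_i dl_i = sigma mu - l_i x_i.  Solving this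
   scalar relation for dx_i (resp. dl_i) gives the two identities of part 1
   (lemma [centering_gap]); they are symmetric under (x,dx) <-> (l,dl).

   For part 2 write the gap as (x_i/l_i) dl_i.  Three estimates make it O(mu^2)
   on the active set A (and symmetrically (l_i/x_i) dx_i on I):
   - x_i l_i <= (1 + C1) mu, read off the last rows of ||F_mu(x,l)|| <= C1 mu;
   - ||(dx,dl)|| = ||F'^{-1} F_{sigma mu}|| = O(mu), since F_{sigma mu} differs
     from F_mu by at most mu in each entry (lemmas [enorm_Fmu_sigma] and
     [solution_bound]);
   - l_i >= m/2 for i in A (x_i >= m/2 for i in I), where m = min_i (xs_i + ls_i)
     > 0, because (x,l) is m/4-close to the trajectory point, itself within
     C4 mu <= m/4 of (xs,ls) ([coordinate_lower_bound]).
   Their combination is the scalar estimate [gap_estimate], applied per index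
   in [gap_active] and [gap_inactive]; the theorem then only has to choose
   rho = m/4, mubar = min(muhat, m/(4(|C4|+1))) and the constant C. *)

Lemma fin_posmin (R : realFieldType) n (a : 'I_n -> R) :
  (forall i, 0 < a i) -> exists m : R, 0 < m /\ forall i, m <= a i.
Proof.
move=> a_pos; exists (\big[Num.min/1]_i a i); split.
  by apply: (big_ind (fun x => 0 < x)) => // x y x0 y0; rewrite lt_min x0.
by move=> i; rewrite (bigD1 i) //= ge_min lexx.
Qed.

Lemma centering_gap (R : fieldType) (a b da db s : R) :
  a != 0 -> b != 0 -> b * da + a * db = - (b * a - s) ->
  (- a + s / b) - da = a / b * db.
Proof.
move=> a0 b0 row.
have -> : da = (- (b * a - s) - a * db) / b by rewrite -row; field.
by field.
Qed.

(* If 0 <= a, a b <= q and b >= m/2 > 0, then the ratio a/b is at most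
   4 q / m^2: this turns the O(mu) product and O(mu) step into O(mu^2). *)
Lemma ratio_bound (R : realFieldType) (a b d m q E : R) :
  0 < m -> m / 2 <= b -> 0 <= a -> a * b <= q -> `|d| <= E ->
  `|a / b * d| <= 4 * q / m ^+ 2 * E.
Proof.
move=> m0 hb a0 hab hd.
have b0 : 0 < b by lra.
have ab0 : 0 <= a / b by rewrite divr_ge0 // ltW.
rewrite normrM ger0_norm //; apply: ler_pM => //.
have -> : a / b = a * b / b ^+ 2 by field; apply: lt0r_neq0.
rewrite ler_pdivrMr ?exprn_gt0 //.
have -> : 4 * q / m ^+ 2 * b ^+ 2 = q * (2 * b / m) ^+ 2.
  by field; apply: lt0r_neq0.
have t1 : 1 <= 2 * b / m by rewrite ler_pdivlMr // mul1r; lra.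
have : 1 <= (2 * b / m) ^+ 2 by rewrite expr_ge1 //; lra.
have : 0 <= a * b by rewrite mulr_ge0 // ltW.
nra.
Qed.

Lemma coordinate_lower_bound (R : realFieldType) (a b c m : R) :
  m <= c -> `|a - b| <= m / 4 -> `|b - c| <= m / 4 -> m / 2 <= a.
Proof.
by move=> mc; rewrite !ler_distlC => /andP [_ ab] /andP [_ bc]; lra.
Qed.

Lemma gap_estimate (R : realFieldType) (a b da db s m q E : R) :
  0 < a -> 0 < b -> b * da + a * db = - (b * a - s) ->
  0 < m -> m / 2 <= b -> a * b <= q -> `|db| <= E ->
  `|(- a + s / b) - da| <= 4 * q / m ^+ 2 * E.
Proof.
move=> a0 b0 row m0 hb hab hdb.
rewrite (centering_gap (lt0r_neq0 a0) (lt0r_neq0 b0) row).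
exact: ratio_bound (ltW a0) hab hdb.
Qed.

Section EuclideanNorm.
Variable R : realType.

Lemma enorm_entry m (v : 'cV[R]_m) i : `|v i 0| <= enorm v.
Proof.
rewrite /enorm -sqrtr_sqr ler_sqrt; last first.
  by rewrite sumr_ge0 // => j _; exact: sqr_ge0.
by rewrite (bigD1 i) //= lerDl; apply: sumr_ge0 => j _; apply: sqr_ge0.
Qed.

Lemma enorm_sqr m (v : 'cV[R]_m) : enorm v ^+ 2 = \sum_(i < m) v i 0 ^+ 2.
Proof. by rewrite sqr_sqrtr // sumr_ge0 // => i _; apply: sqr_ge0. Qed.

Lemma enorm_ge0 m (v : 'cV[R]_m) : 0 <= enorm v.
Proof. exact: sqrtr_ge0. Qed.

Lemma enorm_opp m (v : 'cV[R]_m) : enorm (- v) = enorm v.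
Proof.
by rewrite /enorm; congr Num.sqrt; apply: eq_bigr => i _; rewrite mxE sqrrN.
Qed.

Lemma enorm_perturb m (u v : 'cV[R]_m) (c : R) :
  (forall k, `|v k 0 - u k 0| <= c) ->
  enorm v ^+ 2 <= 2 * enorm u ^+ 2 + 2 * m%:R * c ^+ 2.
Proof.
move=> close; rewrite !enorm_sqr.
apply: (@le_trans _ _ (\sum_(k < m) (2 * u k 0 ^+ 2 + 2 * c ^+ 2))).
  apply: ler_sum => k _.
  have dk : (v k 0 - u k 0) ^+ 2 <= c ^+ 2.
    by rewrite -real_normK ?num_real // lerXn2r ?nnegrE // (le_trans _ (close k)).
  have -> : v k 0 = u k 0 + (v k 0 - u k 0) by ring.
  have := sqr_ge0 (u k 0 - (v k 0 - u k 0)); nra.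
rewrite big_split /= -mulr_sumr sumr_const card_ord -mulr_natr; nra.
Qed.

Lemma pdist_x n (x l y k : 'cV[R]_n) i : `|x i 0 - y i 0| <= pdist x l y k.
Proof.
have := enorm_entry (col_mx x l - col_mx y k) (lshift n i).
by rewrite /pdist opp_col_mx add_col_mx col_mxEu !mxE.
Qed.

Lemma pdist_l n (x l y k : 'cV[R]_n) i : `|l i 0 - k i 0| <= pdist x l y k.
Proof.
have := enorm_entry (col_mx x l - col_mx y k) (rshift n i).
by rewrite /pdist opp_col_mx add_col_mx col_mxEd !mxE.
Qed.

(* A linear system with an inverse bounded by M and right-hand side of size
   O(mu) has a solution of size O(mu); the constant is kept positive. *)
Lemma solution_bound m (A : 'M[R]_m) (d w : 'cV[R]_m) (M K mu : R) :
  A \in unitmx -> (forall v, enorm (invmx A *m v) <= M * enorm v) ->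
  A *m d = - w -> enorm w <= K * mu -> 0 <= K -> 0 < mu ->
  enorm d <= (`|M| + 1) * (K + 1) * mu.
Proof.
move=> Aunit inv_bound Ad hw K0 mu0.
have -> : d = invmx A *m (- w) by rewrite -Ad mulKmx.
apply: le_trans (inv_bound _) _; rewrite enorm_opp.
have w0 := enorm_ge0 w; have M0 : 0 <= `|M| := normr_ge0 M.
have : M * enorm w <= `|M| * enorm w.
  by rewrite ler_wpM2r // real_ler_norm ?num_real.
have : `|M| * enorm w <= `|M| * (K * mu) by rewrite ler_wpM2l.
nra.
Qed.

End EuclideanNorm.

Section NewtonSystem.
Variables (R : realType) (n : nat) (f : 'cV[R]_n -> R).

Lemma Fmu_bottom mu x l i : Fmu f mu x l (rshift n i) 0 = l i 0 * x i 0 - mu.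
Proof. by rewrite /Fmu col_mxEd mxE. Qed.

Lemma Fmu_shift mu mu' x l k :
  `|Fmu f mu' x l k 0 - Fmu f mu x l k 0| <= `|mu - mu'|.
Proof.
rewrite -(splitK k); case: (fintype.split k) => j /=.
  by rewrite /Fmu !col_mxEu subrr normr0.
rewrite !Fmu_bottom; set p := l j 0 * x j 0.
by rewrite (_ : p - mu' - (p - mu) = mu - mu') //; ring.
Qed.

Lemma newton_row mu x l dx dl i :
  Fprime f x l *m col_mx dx dl = - Fmu f mu x l ->
  l i 0 * dx i 0 + x i 0 * dl i 0 = - (l i 0 * x i 0 - mu).
Proof.
rewrite /Fprime /Fmu mul_block_col opp_col_mx !mul_diag_mx.
by move=> /eq_col_mx [_ /matrixP /(_ i 0)]; rewrite !mxE.
Qed.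

Lemma newton_row_swapped mu x l dx dl i :
  Fprime f x l *m col_mx dx dl = - Fmu f mu x l ->
  x i 0 * dl i 0 + l i 0 * dx i 0 = - (x i 0 * l i 0 - mu).
Proof. by move/(newton_row i); rewrite addrC [x i 0 * l i 0]mulrC. Qed.

Lemma centering_identities s x l dx dl :
  vpos x -> vpos l -> Fprime f x l *m col_mx dx dl = - Fmu f s x l ->
  forall i,
    ((- x i 0 + s / l i 0) - dx i 0 = x i 0 / l i 0 * dl i 0) /\
    ((- l i 0 + s / x i 0) - dl i 0 = l i 0 / x i 0 * dx i 0).
Proof.
move=> px pl hN i; split; apply: centering_gap; rewrite ?lt0r_neq0 //.
  exact: newton_row hN.
exact: newton_row_swapped hN.
Qed.

Lemma complementarity_bound mu x l (C1 : R) i :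
  enorm (Fmu f mu x l) <= C1 * mu -> x i 0 * l i 0 <= (1 + C1) * mu.
Proof.
move=> hF; have := le_trans (enorm_entry _ (rshift n i)) hF.
by rewrite Fmu_bottom [x i 0 * _]mulrC ler_distl => /andP [_]; lra.
Qed.

Lemma enorm_Fmu_sigma mu sigma x l (C1 : R) :
  0 < mu -> 0 < sigma < 1 -> 0 <= C1 -> enorm (Fmu f mu x l) <= C1 * mu ->
  enorm (Fmu f (sigma * mu) x l) <= Num.sqrt (2 * C1 ^+ 2 + 2 * (n + n)%:R) * mu.
Proof.
move=> mu0 /andP [s0 s1] C10 hF.
have shift k : `|Fmu f (sigma * mu) x l k 0 - Fmu f mu x l k 0| <= mu.
  apply: le_trans (Fmu_shift _ _ _ _ _) _.
  by rewrite ger0_norm; nra.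
have sq := enorm_perturb shift.
have C1mu0 : 0 <= C1 * mu by rewrite mulr_ge0 // ltW.
have hF2 : enorm (Fmu f mu x l) ^+ 2 <= (C1 * mu) ^+ 2.
  by rewrite ler_sqr ?nnegrE ?enorm_ge0.
have K0 : Num.sqrt (2 * C1 ^+ 2 + 2 * (n + n)%:R) * mu \in Num.nneg.
  by rewrite nnegrE mulr_ge0 ?sqrtr_ge0 // ltW.
have e0 : enorm (Fmu f (sigma * mu) x l) \in Num.nneg by rewrite nnegrE enorm_ge0.
have K2 : 0 <= 2 * C1 ^+ 2 + 2 * (n + n)%:R.
  by rewrite addr_ge0 ?mulr_ge0 ?sqr_ge0.
rewrite -(ler_sqr e0 K0) exprMn (sqr_sqrtr K2).
nra.
Qed.

(* The x-gap on the active set: l_i stays >= m/2 since ls_i >= m. *)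
Lemma gap_active s (x l dx dl xm lm xs ls : 'cV[R]_n) (m q E : R) i :
  vpos x -> vpos l -> Fprime f x l *m col_mx dx dl = - Fmu f s x l ->
  0 < m -> m <= ls i 0 ->
  pdist x l xm lm < m / 4 -> pdist xm lm xs ls <= m / 4 ->
  x i 0 * l i 0 <= q -> enorm (col_mx dx dl) <= E ->
  `|(- x i 0 + s / l i 0) - dx i 0| <= 4 * q / m ^+ 2 * E.
Proof.
move=> px pl hN m0 ls_m near_path near_limit hq hE.
apply: gap_estimate (px i) (pl i) (newton_row i hN) m0 _ hq _.
  apply: (@coordinate_lower_bound _ _ (lm i 0) (ls i 0) _ ls_m).
    exact: ltW (le_lt_trans (pdist_l _ _ _ _ i) near_path).
  exact: le_trans (pdist_l _ _ _ _ i) near_limit.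
apply: le_trans hE.
by have := enorm_entry (col_mx dx dl) (rshift n i); rewrite col_mxEd.
Qed.

(* The l-gap on the inactive set: x_i stays >= m/2 since xs_i >= m. *)
Lemma gap_inactive s (x l dx dl xm lm xs ls : 'cV[R]_n) (m q E : R) i :
  vpos x -> vpos l -> Fprime f x l *m col_mx dx dl = - Fmu f s x l ->
  0 < m -> m <= xs i 0 ->
  pdist x l xm lm < m / 4 -> pdist xm lm xs ls <= m / 4 ->
  x i 0 * l i 0 <= q -> enorm (col_mx dx dl) <= E ->
  `|(- l i 0 + s / x i 0) - dl i 0| <= 4 * q / m ^+ 2 * E.
Proof.
move=> px pl hN m0 xs_m near_path near_limit hq hE.
rewrite mulrC in hq.
apply: gap_estimate (pl i) (px i) (newton_row_swapped i hN) m0 _ hq _.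
  apply: (@coordinate_lower_bound _ _ (xm i 0) (xs i 0) _ xs_m).
    exact: ltW (le_lt_trans (pdist_x _ _ _ _ i) near_path).
  exact: le_trans (pdist_x _ _ _ _ i) near_limit.
apply: le_trans hE.
by have := enorm_entry (col_mx dx dl) (lshift n i); rewrite col_mxEu.
Qed.

End NewtonSystem.

Theorem proposition2 (R : realType) (n : nat) (f : 'cV[R]_n -> R)
  (xs ls : 'cV[R]_n) (delta M muhat C4 : R) (xmu lmu : R -> 'cV[R]_n)
  (H : standing_hyps f xs ls delta M muhat C4 xmu lmu)
  (sigma : R) (Hsigma : 0 < sigma < 1) :
  (* part 1: the algebraic identities *)
  (forall (mu : R) (x l dxN dlN : 'cV[R]_n),
     0 < mu -> pdist x l xs ls < delta -> vpos x -> vpos l ->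
     Fprime f x l *m col_mx dxN dlN = - Fmu f (sigma * mu) x l ->
     forall i : 'I_n,
       ((- x i 0 + sigma * mu / l i 0) - dxN i 0 = x i 0 / l i 0 * dlN i 0) /\
       ((- l i 0 + sigma * mu / x i 0) - dlN i 0 = l i 0 / x i 0 * dxN i 0)) /\
  (* part 2: O(mu^2) estimates *)
  (forall C1 : R, 0 < C1 ->
   exists rho : R, exists mubar : R, exists C : R,
     0 < rho /\ 0 < mubar <= muhat /\ 0 < C /\
     forall (mu : R) (x l dxN dlN : 'cV[R]_n),
       0 < mu <= mubar ->
       pdist x l xs ls < delta -> vpos x -> vpos l ->
       pdist x l (xmu mu) (lmu mu) < rho ->
       enorm (Fmu f mu x l) <= C1 * mu ->
       Fprime f x l *m col_mx dxN dlN = - Fmu f (sigma * mu) x l ->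
       (forall i : 'I_n, xs i 0 = 0 ->
          `|(- x i 0 + sigma * mu / l i 0) - dxN i 0| <= C * mu ^+ 2) /\
       (forall i : 'I_n, 0 < xs i 0 ->
          `|(- l i 0 + sigma * mu / x i 0) - dlN i 0| <= C * mu ^+ 2)).
Proof.
split=> [mu x l dx dl _ _|C1 C10]; first exact: centering_identities.
case: H => _ [_ [_ [_ [compl [pos [_ [_ [Hinv [muhat0 [Htraj _]]]]]]]]]].
have [m [m0 Hm]] := fin_posmin pos.
pose K := Num.sqrt (2 * C1 ^+ 2 + 2 * (n + n)%:R).
pose D := (`|M| + 1) * (K + 1).
have C40 : 0 < `|C4| + 1 by rewrite ltr_wpDl.
have D0 : 0 < D by rewrite mulr_gt0 // ltr_wpDl // sqrtr_ge0.
exists (m / 4), (Num.min muhat (m / (4 * (`|C4| + 1)))),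
  (4 * (1 + C1) / m ^+ 2 * D).
split; first by rewrite divr_gt0.
split; first by rewrite lt_min muhat0 ge_min lexx divr_gt0 ?mulr_gt0.
split; first by apply: mulr_gt0 D0; apply: divr_gt0; [lra | exact: exprn_gt0].
move=> mu x l dx dl /andP [mu0]; rewrite le_min => /andP [mu_muhat mu_small].
move=> hd px pl near_path hF hN.
have [_ [_ [_ [_ htraj]]]] := Htraj mu (introT andP (conj mu0 mu_muhat)).
have near_limit : pdist (xmu mu) (lmu mu) xs ls <= m / 4.
  apply: le_trans htraj _; move: mu_small; rewrite ler_pdivlMr ?mulr_gt0 //.
  have := real_ler_norm (num_real C4); nra.
have [Funit Fbound] := Hinv x l hd.
have step : enorm (col_mx dx dl) <= D * mu.
  apply: (solution_bound Funit Fbound hN _ (sqrtr_ge0 _) mu0).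
  exact: enorm_Fmu_sigma mu0 Hsigma (ltW C10) hF.
have -> : 4 * (1 + C1) / m ^+ 2 * D * mu ^+ 2 =
          4 * ((1 + C1) * mu) / m ^+ 2 * (D * mu).
  by rewrite mulrA; field; rewrite lt0r_neq0.
have prod i := complementarity_bound i hF.
split=> i hi.
  apply: gap_active px pl hN m0 _ near_path near_limit (prod i) step.
  by have := Hm i; rewrite hi add0r.
apply: gap_inactive px pl hN m0 _ near_path near_limit (prod i) step.
have /eqP := compl i; rewrite mulf_eq0 (gt_eqF hi) /= => /eqP ls0.
by have := Hm i; rewrite ls0 addr0.
Qed.
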